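(* Let $\gamma(t)=(t,t^2,t^3)$ be the moment curve in $\mathbb{R}^3$ and let $H_2,H_3\subset\mathbb{R}^3$ be two orthogonal affine planes. Then it is not possible that both $H_2$ and $H_3$ each contain at least three distinct points of $\{\gamma(t):t>0\}$.
   Context: Two affine planes are orthogonal if their normal vectors are orthogonal. *)

From HB Require Import structures.
From mathcomp Require Import all_boot all_order all_algebra.
From mathcomp Require Import reals.
Set Implicit Arguments. Unset Strict Implicit. Unset Printing Implicit Defensive.
Import Order.TTheory GRing.Theory Num.Theory.
Local Open Scope ring_scope.

Definition vec3 (R : realType) := (R * R * R)%type.

Definition dot3 (R : realType) (u v : vec3 R) : R :=
  u.1.1 * v.1.1 + u.1.2 * v.1.2 + u.2 * v.2.

Definition moment (R : realType) (t : R) : vec3 R := (t, t ^+ 2, t ^+ 3).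

Record plane (R : realType) := Plane {
  pnormal : vec3 R;
  poffset : R;
  pnormal_nz : pnormal <> (0, 0, 0)
}.

Definition on_plane (R : realType) (H : plane R) (x : vec3 R) : Prop :=
  dot3 (pnormal H) x = poffset H.

Definition orthogonal_planes (R : realType) (H1 H2 : plane R) : Prop :=
  dot3 (pnormal H1) (pnormal H2) = 0.

Definition three_positive_moment_points (R : realType) (H : plane R) : Prop :=
  exists t1 t2 t3 : R,
    [/\ 0 < t1, 0 < t2 & 0 < t3] /\
    [/\ moment t1 <> moment t2, moment t1 <> moment t3 & moment t2 <> moment t3] /\
    [/\ on_plane H (moment t1), on_plane H (moment t2) & on_plane H (moment t3)].

(* A plane {x | <(a,b,c), x> = d} meets the moment curve at the roots of
   c t^3 + b t^2 + a t - d. If it passes through gamma(t1), gamma(t2), gamma(t3)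
   for distinct t1, t2, t3, then c <> 0 and, by Vieta, its normal is
   c (e2, -e1, 1) with e1, e2 the elementary symmetric functions of the t_i.
   For positive t_i both e1 and e2 are positive, so the inner product
   c c' (e2 e2' + e1 e1' + 1) of two such normals cannot vanish. *)
From mathcomp Require Import all_boot all_order all_algebra reals.
From mathcomp Require Import ring.
Import Order.TTheory GRing.Theory Num.Theory.
Set Implicit Arguments.
Unset Strict Implicit.
Unset Printing Implicit Defensive.

Local Open Scope ring_scope.

Section CubicThroughThreeRoots.
Variable R : idomainType.

Lemma mulf_subr_eq0 (x y q : R) : x != y -> (x - y) * q = 0 -> q = 0.
Proof. by move=> nxy /eqP; rewrite mulf_eq0 subr_eq0 (negbTE nxy) => /eqP. Qed.

(* Successive divided differences of t |-> a t + b t^2 + c t^3 vanish. *)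
Lemma cubic_vieta (a b c d t1 t2 t3 : R) :
  t1 != t2 -> t1 != t3 -> t2 != t3 ->
  a * t1 + b * t1 ^+ 2 + c * t1 ^+ 3 = d ->
  a * t2 + b * t2 ^+ 2 + c * t2 ^+ 3 = d ->
  a * t3 + b * t3 ^+ 2 + c * t3 ^+ 3 = d ->
  a = c * (t1 * t2 + t1 * t3 + t2 * t3) /\ b = - (c * (t1 + t2 + t3)).
Proof.
move=> n12 n13 n23 e1 e2 e3.
pose q s t := c * (s ^+ 2 + s * t + t ^+ 2) + b * (s + t) + a.
have q12 : q t1 t2 = 0.
  apply: (mulf_subr_eq0 n12); rewrite -(subrr d) -{1}e1 -e2 /q; ring.
have q13 : q t1 t3 = 0.
  apply: (mulf_subr_eq0 n13); rewrite -(subrr d) -{1}e1 -e3 /q; ring.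
have sum_b : c * (t1 + t2 + t3) + b = 0.
  apply: (mulf_subr_eq0 n23); rewrite -(subrr (q t1 t2)) {2}q12 -q13 /q; ring.
have hb : b = - (c * (t1 + t2 + t3)).
  by apply/eqP; rewrite -subr_eq0 opprK addrC sum_b.
split=> //; apply/eqP; rewrite -subr_eq0; apply/eqP.
by rewrite -q12 /q hb; ring.
Qed.

End CubicThroughThreeRoots.

Section MomentCurve.
Variable R : realType.

Lemma neq_of_moment_neq (s t : R) : moment s <> moment t -> s != t.
Proof. by move=> nst; apply/eqP => est; apply: nst; rewrite est. Qed.

Lemma plane_normal_of_three_moment_points (H : plane R) :
  three_positive_moment_points H ->
  exists c s1 s2 : R,
    [/\ c != 0, 0 < s1, 0 < s2 & pnormal H = (c * s2, - (c * s1), c)].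
Proof.
case: H => [[[a b] c] d nz] [t1 [t2 [t3 [[p1 p2 p3] [[m12 m13 m23] [o1 o2 o3]]]]]].
move: o1 o2 o3; rewrite /on_plane /dot3 /moment /= => o1 o2 o3.
have [ea eb] := cubic_vieta (neq_of_moment_neq m12) (neq_of_moment_neq m13)
  (neq_of_moment_neq m23) o1 o2 o3.
exists c, (t1 + t2 + t3), (t1 * t2 + t1 * t3 + t2 * t3); split=> //.
- by apply/eqP => c0; apply: nz; rewrite ea eb c0 !mul0r oppr0.
- by rewrite !addr_gt0.
- by rewrite !addr_gt0 ?mulr_gt0.
- by rewrite ea eb.
Qed.

Lemma dot3_positive_moment_normals_neq0 (c c' s1 s2 s1' s2' : R) :
  c != 0 -> c' != 0 -> 0 < s1 -> 0 < s2 -> 0 < s1' -> 0 < s2' ->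
  dot3 (c * s2, - (c * s1), c) (c' * s2', - (c' * s1'), c') != 0.
Proof.
move=> c0 c'0 p1 p2 p1' p2'.
have -> : dot3 (c * s2, - (c * s1), c) (c' * s2', - (c' * s1'), c') =
  (c * c') * (s2 * s2' + s1 * s1' + 1) by rewrite /dot3 /=; ring.
by rewrite !mulf_neq0 // gt_eqF // !addr_gt0 ?mulr_gt0.
Qed.

End MomentCurve.

Theorem mainTheorem4 (R : realType) (H2 H3 : plane R) :
  orthogonal_planes H2 H3 ->
  ~ (three_positive_moment_points H2 /\ three_positive_moment_points H3).
Proof.
move=> ortho [/plane_normal_of_three_moment_points [c [s1 [s2 [c0 p1 p2 n2]]]]
              /plane_normal_of_three_moment_points [c' [s1' [s2' [c'0 p1' p2' n3]]]]].
move: ortho; rewrite /orthogonal_planes n2 n3; apply/eqP.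
exact: dot3_positive_moment_normals_neq0.
Qed.
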